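(* Let $\Gamma^i_k$ and $\Gamma^j_k$ be invertible (positive definite) covariance matrices and $\omega\in[0,1]$. The division of Gaussian densities \[ \frac{\mathcal{N}(\mathbf{x}_k; \hat{\mathbf{x}}^{i}_k, \Gamma^{i}_k)\, \mathcal{N}(\mathbf{x}_k; \hat{\mathbf{x}}^{j}_k, \Gamma^{j}_k)}{\mathcal{N}(\mathbf{x}_k; \hat{\mathbf{x}}^{eq}_k, \Gamma^{eq}_k)} \propto \mathcal{N}(\mathbf{x}_k; \hat{\mathbf{x}}^f_k, \Gamma^f_k), \] where $(\hat{\mathbf{x}}^{eq}_k,\Gamma^{eq}_k)$ is the moment-matched Gaussian approximation of the mixture $\omega\,\mathcal{N}(\hat{\mathbf{x}}^i_k,\Gamma^i_k)+(1-\omega)\,\mathcal{N}(\hat{\mathbf{x}}^j_k,\Gamma^j_k)$, is always valid; that is, $\Gamma^{eq}_k - \left({\Gamma^{i}_k}^{-1} + {\Gamma^{j}_k}^{-1}\right)^{-1} \succ \mathbf{0}$, so that $\Gamma^f_k = \left({\Gamma^{i}_k}^{-1} + {\Gamma^{j}_k}^{-1} - {\Gamma^{eq}_k}^{-1}\right)^{-1}$ is a valid covariance.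
   Context: Harmonic mean density (HMD) fusion of two local Gaussian track densities $p(\mathbf{x}_k|\mathbf{z}^i_k)=\mathcal{N}(\mathbf{x}_k;\hat{\mathbf{x}}^i_k,\Gamma^i_k)$ and $p(\mathbf{x}_k|\mathbf{z}^j_k)=\mathcal{N}(\mathbf{x}_k;\hat{\mathbf{x}}^j_k,\Gamma^j_k)$: the fused density is their product divided by the weighted mixture of the two, and the denominator mixture is approximated by a single Gaussian with mean $\hat{\mathbf{x}}^{eq}_k=\omega\hat{\mathbf{x}}^i_k+(1-\omega)\hat{\mathbf{x}}^j_k$ and covariance $\Gamma^{eq}_k=\omega[\Gamma^i_k+(\hat{\mathbf{x}}^{eq}_k-\hat{\mathbf{x}}^i_k)(\hat{\mathbf{x}}^{eq}_k-\hat{\mathbf{x}}^i_k)^T]+(1-\omega)[\Gamma^j_k+(\hat{\mathbf{x}}^{eq}_k-\hat{\mathbf{x}}^j_k)(\hat{\mathbf{x}}^{eq}_k-\hat{\mathbf{x}}^j_k)^T]$. The fused mean is $\hat{\mathbf{x}}^f_k=\Gamma^f_k[{\Gamma^i_k}^{-1}\hat{\mathbf{x}}^i_k+{\Gamma^j_k}^{-1}\hat{\mathbf{x}}^j_k-{\Gamma^{eq}_k}^{-1}\hat{\mathbf{x}}^{eq}_k]$. Division of a Gaussian (here the product density with covariance $\Gamma^{num}_k=({\Gamma^i_k}^{-1}+{\Gamma^j_k}^{-1})^{-1}$) by another Gaussian yields a valid Gaussian only if the divisor's covariance dominates, $\Gamma^{eq}_k \succeq \Gamma^{num}_k$. *)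

From mathcomp Require Import all_boot all_order all_algebra.
Set Implicit Arguments. Unset Strict Implicit. Unset Printing Implicit Defensive.
Import Order.TTheory GRing.Theory Num.Theory.
Local Open Scope ring_scope.

Definition posdef (R : realFieldType) (n : nat) (A : 'M[R]_n) : Prop :=
  A^T = A /\ forall x : 'cV[R]_n, x != 0 -> 0 < (x^T *m A *m x) 0 0.

(* Moment-matched mean of w N(xi,Gi) + (1-w) N(xj,Gj). *)
Definition xeq (R : realFieldType) (n : nat) (w : R) (xi xj : 'cV[R]_n) : 'cV[R]_n :=
  w *: xi + (1 - w) *: xj.

Definition Geq (R : realFieldType) (n : nat) (w : R) (xi xj : 'cV[R]_n)
    (Gi Gj : 'M[R]_n) : 'M[R]_n :=
  let xe := xeq w xi xj in
  w *: (Gi + (xe - xi) *m (xe - xi)^T) + (1 - w) *: (Gj + (xe - xj) *m (xe - xj)^T).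

(* Covariance of the (normalized) product density. *)
Definition Gnum (R : realFieldType) (n : nat) (Gi Gj : 'M[R]_n) : 'M[R]_n :=
  invmx (invmx Gi + invmx Gj).

Definition Gf (R : realFieldType) (n : nat) (w : R) (xi xj : 'cV[R]_n)
    (Gi Gj : 'M[R]_n) : 'M[R]_n :=
  invmx (invmx Gi + invmx Gj - invmx (Geq w xi xj Gi Gj)).

From mathcomp Require Import all_boot all_order all_algebra.
From mathcomp Require Import ring lra.
Import Order.TTheory GRing.Theory Num.Theory.
Set Implicit Arguments. Unset Strict Implicit. Unset Printing Implicit Defensive.
Local Open Scope ring_scope.

(* Matrix inversion reverses the Loewner order on positive definite matrices,
   so Gnum = (Gi^-1 + Gj^-1)^-1 lies strictly below Gi and below Gj. The
   moment-matched covariance Geq is a convex combination of Gi and Gj plus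
   positive semidefinite spread-of-means terms, hence lies strictly above
   Gnum. Inverting once more gives Gnum^-1 - Geq^-1 = Gi^-1 + Gj^-1 - Geq^-1
   positive definite, and so is its inverse Gf. *)

Section PositiveDefinite.
Variables (R : realFieldType) (n : nat).
Implicit Types (A B P : 'M[R]_n) (u v x y z c : 'cV[R]_n).

Definition dot u v : R := (u^T *m v) 0 0.

Lemma dotE u v : dot u v = \sum_i u i 0 * v i 0.
Proof. by rewrite /dot mxE; apply: eq_bigr => i _; rewrite mxE. Qed.

Lemma dotC u v : dot u v = dot v u.
Proof. by rewrite !dotE; apply: eq_bigr => i _; rewrite mulrC. Qed.

Lemma dotDr u v z : dot u (v + z) = dot u v + dot u z.
Proof. by rewrite /dot mulmxDr mxE. Qed.

Lemma dotZr a u v : dot u (a *: v) = a * dot u v.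
Proof. by rewrite /dot -scalemxAr mxE. Qed.

Lemma dotBr u v z : dot u (v - z) = dot u v - dot u z.
Proof. by rewrite dotDr -scaleN1r dotZr mulN1r. Qed.

Lemma dotBl u v z : dot (u - v) z = dot u z - dot v z.
Proof. by rewrite dotC dotBr !(dotC z). Qed.

Lemma dot0r u : dot u 0 = 0.
Proof. by rewrite /dot mulmx0 mxE. Qed.

Lemma dot_trmx u A v : dot u (A *m v) = dot (A^T *m u) v.
Proof. by rewrite /dot trmx_mul trmxK mulmxA. Qed.

Lemma dot_outer x c : dot x (c *m c^T *m x) = dot x c ^+ 2.
Proof. by rewrite /dot -mulmxA mulmxA mxE big_ord1 expr2 -/(dot x c) dotC. Qed.

Lemma posdefP A :
  posdef A <-> A^T = A /\ forall x, x != 0 -> 0 < dot x (A *m x).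
Proof.
by rewrite /posdef /dot; split=> -[sA hA]; split=> // x /hA; rewrite mulmxA.
Qed.

Definition psdef A := A^T = A /\ forall x, 0 <= dot x (A *m x).

Lemma posdef_psdef A : posdef A -> psdef A.
Proof.
move=> /posdefP[sA hA]; split=> // x.
by have [->|/hA/ltW //] := eqVneq x 0; rewrite mulmx0 dot0r.
Qed.

Lemma psdefD A B : psdef A -> psdef B -> psdef (A + B).
Proof.
move=> [sA hA] [sB hB]; split; first by rewrite linearD /= sA sB.
by move=> x; rewrite mulmxDl dotDr addr_ge0.
Qed.

Lemma psdefZ a A : 0 <= a -> psdef A -> psdef (a *: A).
Proof.
move=> a_ge0 [sA hA]; split; first by rewrite linearZ /= sA.
by move=> x; rewrite -scalemxAl dotZr mulr_ge0.
Qed.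

Lemma psdef_outer c : psdef (c *m c^T).
Proof. by split=> [|x]; rewrite ?trmx_mul ?trmxK ?dot_outer ?sqr_ge0. Qed.

Lemma posdefD A B : posdef A -> posdef B -> posdef (A + B).
Proof.
move=> /posdefP[sA hA] /posdefP[sB hB]; apply/posdefP.
split; first by rewrite linearD /= sA sB.
by move=> x x0; rewrite mulmxDl dotDr addr_gt0 ?hA ?hB.
Qed.

Lemma posdef_addr_psdef A P : posdef A -> psdef P -> posdef (A + P).
Proof.
move=> /posdefP[sA hA] [sP hP]; apply/posdefP.
split; first by rewrite linearD /= sA sP.
by move=> x x0; rewrite mulmxDl dotDr ltr_pwDl ?hA ?hP.
Qed.

Lemma posdef_convex w A B : 0 <= w <= 1 ->
  posdef A -> posdef B -> posdef (w *: A + (1 - w) *: B).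
Proof.
move=> /andP[w_ge0 w_le1] /posdefP[sA hA] /posdefP[sB hB]; apply/posdefP.
split; first by rewrite linearD /= !linearZ /= sA sB.
move=> x x0; rewrite mulmxDl -!scalemxAl dotDr !dotZr.
by have := hA x x0; have := hB x x0; nra.
Qed.

Lemma posdef_unitmx A : posdef A -> A \in unitmx.
Proof.
move=> /posdefP[_ hA]; rewrite unitmxE unitfE; apply/negP => /det0P[v v0 vA].
have vT0 : v^T != 0 by rewrite -(inj_eq trmx_inj) trmxK trmx0.
by have := hA _ vT0; rewrite /dot trmxK mulmxA vA mul0mx mxE ltxx.
Qed.

Lemma unitmx_mulmx_neq0 A x : A \in unitmx -> x != 0 -> A *m x != 0.
Proof.
by move=> uA; apply: contraNneq => Ax0; rewrite -(mulKmx uA x) Ax0 mulmx0.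
Qed.

Lemma posdef_invmx A : posdef A -> posdef (invmx A).
Proof.
move=> pA; have uA := posdef_unitmx pA; move/posdefP: pA => [sA hA].
apply/posdefP; split; first by rewrite trmx_inv sA.
move=> x x0; have y0 : invmx A *m x != 0 by rewrite unitmx_mulmx_neq0 ?unitmx_inv.
by have := hA _ y0; rewrite mulKVmx // dotC.
Qed.

Lemma posdef_invmxB A B :
  posdef B -> posdef (A - B) -> posdef (invmx B - invmx A).
Proof.
move=> pB pAB; have pA : posdef A by rewrite -(subrK B A); apply: posdefD.
have uA := posdef_unitmx pA; have uB := posdef_unitmx pB.
have [sB _] := pB; have [sA _] := pA.
apply/posdefP; split; first by rewrite linearB /= !trmx_inv sA sB.
move=> x x0; set y := invmx A *m x; set z := invmx B *m x.
have Ay : A *m y = x by rewrite mulKVmx.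
have Bz : B *m z = x by rewrite mulKVmx.
have y0 : y != 0 by rewrite unitmx_mulmx_neq0 ?unitmx_inv.
(* Completing the square: 0 <= (y - z)^T B (y - z) = y^T B y - 2 x.y + x.z. *)
have square := proj2 (posdef_psdef pB) (y - z).
rewrite mulmxBr Bz !dotBl !dotBr [dot z (B *m y)]dot_trmx sB Bz in square.
have /posdefP[_ /(_ y y0) gap] := pAB.
rewrite mulmxBl dotBr Ay in gap.
rewrite mulmxBl dotBr -/y -/z.
by move: square gap; rewrite (dotC y x) (dotC z x); lra.
Qed.

End PositiveDefinite.

Lemma posdef_subr_Gnum (R : realFieldType) (n : nat) (Gi Gj : 'M[R]_n) :
  posdef Gi -> posdef Gj -> posdef (Gi - Gnum Gi Gj).
Proof.
move=> pGi pGj; rewrite -[Gi in Gi - _]invmxK; apply: posdef_invmxB.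
  exact: posdef_invmx.
by rewrite addrC addKr; apply: posdef_invmx.
Qed.

Lemma GnumC (R : realFieldType) (n : nat) (Gi Gj : 'M[R]_n) :
  Gnum Gi Gj = Gnum Gj Gi.
Proof. by rewrite /Gnum addrC. Qed.

Lemma GeqBE (R : realFieldType) (n : nat) (w : R) (xi xj : 'cV[R]_n)
    (Gi Gj N : 'M[R]_n) :
  let xe := xeq w xi xj in
  Geq w xi xj Gi Gj - N =
    w *: (Gi - N) + (1 - w) *: (Gj - N)
    + (w *: ((xe - xi) *m (xe - xi)^T) + (1 - w) *: ((xe - xj) *m (xe - xj)^T)).
Proof.
rewrite /Geq /=; move: (_ *m _^T) (_ *m _^T) => Pi Pj.
by apply/matrixP => k l; rewrite !mxE; ring.
Qed.

Theorem proposition2 (R : realFieldType) (n : nat) (w : R)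
    (xi xj : 'cV[R]_n) (Gi Gj : 'M[R]_n) :
  posdef Gi -> posdef Gj -> 0 <= w -> w <= 1 ->
  posdef (Geq w xi xj Gi Gj - Gnum Gi Gj) /\ posdef (Gf w xi xj Gi Gj).
Proof.
move=> pGi pGj w_ge0 w_le1.
have pGnum : posdef (Gnum Gi Gj).
  by apply/posdef_invmx/posdefD; exact: posdef_invmx.
have pGeqB : posdef (Geq w xi xj Gi Gj - Gnum Gi Gj).
  rewrite GeqBE; apply: posdef_addr_psdef.
    apply: posdef_convex; first by rewrite w_ge0.
      exact: posdef_subr_Gnum.
    by rewrite GnumC; apply: posdef_subr_Gnum.
  by apply: psdefD; apply: psdefZ (psdef_outer _); rewrite ?subr_ge0.
split=> //; rewrite /Gf -[invmx Gi + _]invmxK.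
exact/posdef_invmx/(posdef_invmxB pGnum pGeqB).
Qed.
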